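(* Let $d\in\mathcal{S}G$ be such that $\pi\big(1+d\,\widehat{\sigma}(d)\big)$ is a unit of $\mathbb{F}G$. Then $\mathfrak{C}_{1,d}$ is a Hermitian LCD $2$-quasi-abelian code over $\mathcal{S}$ of rate $\frac12$, i.e. $\mathfrak{C}_{1,d}$ is a free $\mathcal{S}$-module of rank $n$ inside $(\mathcal{S}G)^2\cong\mathcal{S}^{2n}$.
   Context: Let $\mathcal{S}|\mathcal{R}$ be a Galois extension of degree $2$ of finite commutative chain rings, $\mathbf{m}$ the maximal ideal of $\mathcal{S}$, with residue fields $\mathcal{S}/\mathbf{m}=\mathbb{F}=\mathbb{F}_{q^2}$ and $\mathbb{F}_q$ for $\mathcal{R}$; let $\sigma$ generate $\mathrm{Aut}_{\mathcal{R}}(\mathcal{S})$ (order 2). Let $G$ be a finite abelian group of odd order $n$ with $\gcd(n,q)=1$. Define $\widehat{\sigma}:\mathcal{S}G\to\mathcal{S}G$, $\sum_ga_gg\mapsto\sum_g\sigma(a_g)g^{-1}$. The Hermitian form on $(\mathcal{S}G)^2$ is $\langle(a_1,b_1),(a_2,b_2)\rangle_H=\sum_g a_{1,g}\sigma(a_{2,g})+\sum_g b_{1,g}\sigma(b_{2,g})$. A $2$-quasi-abelian code over $\mathcal{S}$ is an $\mathcal{S}G$-submodule of $(\mathcal{S}G)^2$; it is Hermitian LCD if it meets its Hermitian dual only in $0$. $\mathfrak{C}_{c,d}=\{(uc,ud):u\in\mathcal{S}G\}$. The map $\pi:\mathcal{S}G\to\mathbb{F}G$ reduces coefficients modulo $\mathbf{m}$.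 *)

From HB Require Import structures.
From mathcomp Require Import all_boot all_order all_fingroup all_algebra.
Set Implicit Arguments. Unset Strict Implicit. Unset Printing Implicit Defensive.
Import GRing.Theory.
Local Open Scope ring_scope.

Definition is_ideal (R : finComNzRingType) (I : {set R}) : Prop :=
  [/\ 0 \in I, (forall x y, x \in I -> y \in I -> x + y \in I)
    & (forall r x, x \in I -> r * x \in I)].

Definition chain_ring (R : finComNzRingType) : Prop :=
  forall I J : {set R}, is_ideal I -> is_ideal J -> I \subset J \/ J \subset I.

(* "rho : R -> F is the reduction onto the residue field R/m":
   a surjective ring morphism onto a field whose kernel is the maximal ideal
   m of the chain ring R (= the set of non-units of R). *)
Definition residue_map (R : finComUnitRingType) (F : fieldType)
    (rho : {rmorphism R -> F}) : Prop :=
  (forall y : F, exists x : R, rho x = y) /\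
  (forall x : R, rho x = 0 <-> x \notin GRing.unit).

(* Galois extension S|R of degree 2 with Aut_R(S) generated by sigma of order 2;
   R is viewed inside S through the injective ring morphism iota. *)
Definition galois_ext2 (R S : finComUnitRingType) (iota : {rmorphism R -> S})
    (sigma : {rmorphism S -> S}) : Prop :=
  injective iota /\
      (forall r, sigma (iota r) = iota r) /\
      (forall x, sigma (sigma x) = x) /\
      (exists x, sigma x != x) /\
      (forall tau : {rmorphism S -> S}, bijective tau ->
          (forall r, tau (iota r) = iota r) -> tau =1 id \/ tau =1 sigma) /\
      (* Galois (Chase-Harrison-Rosenberg): fixed ring is R and the
         separability condition for the group {id, sigma} *)
      (forall x, sigma x = x -> exists r, x = iota r) /\
      (exists k (a b : 'I_k -> S),
          \sum_(i < k) a i * b i = 1 /\ \sum_(i < k) a i * sigma (b i) = 0) /\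
      (* degree 2: S is a free R-module of rank 2 *)
      (exists e1 e2 : S, forall x : S, exists! r : R * R,
          x = iota r.1 * e1 + iota r.2 * e2).

(* The group ring R G is represented by coefficient functions {ffun G -> R};
   note the pointwise ring structure of {ffun _ -> _} is NOT used as the
   group-ring product: the product is gmul below. *)

Definition gmul (R : pzRingType) (gT : finGroupType) (a b : {ffun gT -> R})
  : {ffun gT -> R} :=
  [ffun g => \sum_(h : gT) a h * b (h^-1 * g)%g].

Definition gone (R : pzRingType) (gT : finGroupType) : {ffun gT -> R} :=
  [ffun g => if g == 1%g then 1 else 0].

Definition gunit (R : pzRingType) (gT : finGroupType) (a : {ffun gT -> R}) : Prop :=
  exists b, gmul a b = gone R gT /\ gmul b a = gone R gT.

Definition shat (S : pzRingType) (gT : finGroupType) (sigma : S -> S)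
  (a : {ffun gT -> S}) : {ffun gT -> S} := [ffun g => sigma (a g^-1%g)].

Definition gmap (A B : Type) (gT : finGroupType) (f : A -> B)
  (a : {ffun gT -> A}) : {ffun gT -> B} := [ffun g => f (a g)].

Notation pair_ga S gT := ({ffun gT -> S} * {ffun gT -> S})%type.

Definition herm (S : finComUnitRingType) (gT : finGroupType) (sigma : S -> S)
  (x y : pair_ga S gT) : S :=
  \sum_(g : gT) x.1 g * sigma (y.1 g) + \sum_(g : gT) x.2 g * sigma (y.2 g).

Definition qa_code2 (S : finComUnitRingType) (gT : finGroupType)
  (C : {set pair_ga S gT}) : Prop :=
  [/\ (0 : pair_ga S gT) \in C,
      (forall x y, x \in C -> y \in C -> x + y \in C)
    & (forall (u : {ffun gT -> S}) x, x \in C -> (gmul u x.1, gmul u x.2) \in C)].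

Definition herm_dual (S : finComUnitRingType) (gT : finGroupType) (sigma : S -> S)
  (C : {set pair_ga S gT}) : {set pair_ga S gT} :=
  [set x | [forall y in C, herm sigma x y == 0]].

Definition herm_LCD (S : finComUnitRingType) (gT : finGroupType) (sigma : S -> S)
  (C : {set pair_ga S gT}) : Prop :=
  C :&: herm_dual sigma C = [set (0 : pair_ga S gT)].

Definition free_rank (S : finComUnitRingType) (gT : finGroupType)
  (C : {set pair_ga S gT}) (k : nat) : Prop :=
  exists b : 'I_k -> pair_ga S gT,
    (forall i, b i \in C) /\
    (forall x, x \in C -> exists! c : {ffun 'I_k -> S},
        x = ([ffun g => \sum_(i < k) c i * (b i).1 g],
             [ffun g => \sum_(i < k) c i * (b i).2 g])).

Definition Ccd (S : finComUnitRingType) (gT : finGroupType)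
  (c d : {ffun gT -> S}) : {set pair_ga S gT} :=
  [set (gmul u c, gmul u d) | u : {ffun gT -> S}].

(* The Hermitian form pairs (u, u d) and (v, v d) to the coefficient at 1 of
   u (1 + d sigma^(d)) sigma^(v); as v runs over the group elements this
   recovers every coefficient of u (1 + d sigma^(d)).  So a codeword of
   C_{1,d} orthogonal to C_{1,d} comes from some u with u (1 + d sigma^(d)) = 0.
   An element a of S G whose reduction is invertible is regular: lifting the
   inverse gives a b = 1 + m with m having coefficients in the maximal ideal,
   which is principal (chain ring) and generated by a nilpotent t; so
   u a = 0 gives u = u (-m) with m in t (S G), hence u lies in t^n (S G)
   for every n, and u = 0.  Freeness is clear: the map
   u |-> (u, u d) is injective, and the group elements give a basis. *)

From HB Require Import structures.
From mathcomp Require Import all_boot all_order all_fingroup all_algebra.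
Set Implicit Arguments. Unset Strict Implicit. Unset Printing Implicit Defensive.
Import GRing.Theory.
Local Open Scope ring_scope.

Section GroupAlgebra.

Variables (R : pzRingType) (gT : finGroupType).
Implicit Types (a b c : {ffun gT -> R}) (x y : R).

Definition gelem (k : gT) : {ffun gT -> R} := [ffun h => (h == k)%:R].

Definition gscalar x : {ffun gT -> R} := [ffun g => if g == 1%g then x else 0].

Lemma gmulA a b c : gmul (gmul a b) c = gmul a (gmul b c).
Proof.
apply/ffunP => g; rewrite !ffunE.
under eq_bigr => h _ do rewrite ffunE mulr_suml.
rewrite exchange_big /=; apply: eq_bigr => k _.
rewrite ffunE mulr_sumr (reindex_inj (mulgI k)) /=.
by apply: eq_bigr => l _; rewrite mulKg mulrA invMg mulgA.
Qed.

Lemma gmul_scalarl x a : gmul (gscalar x) a = [ffun g => x * a g].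
Proof.
apply/ffunP => g; rewrite !ffunE (bigD1 1%g) //= big1 ?ffunE ?eqxx ?invg1 ?mul1g ?addr0 //.
by move=> h /negbTE h1; rewrite ffunE h1 mul0r.
Qed.

Lemma gmul_scalarr x a : gmul a (gscalar x) = [ffun g => a g * x].
Proof.
apply/ffunP => g; rewrite !ffunE (bigD1 g) //= big1 ?ffunE ?mulVg ?eqxx ?addr0 //.
by move=> h hg; rewrite ffunE -eq_mulVg1 (negbTE hg) mulr0.
Qed.

Lemma gmul1r a : gmul (gone R gT) a = a.
Proof. by rewrite gmul_scalarl; apply/ffunP => g; rewrite ffunE mul1r. Qed.

Lemma gmulr1 a : gmul a (gone R gT) = a.
Proof. by rewrite gmul_scalarr; apply/ffunP => g; rewrite ffunE mulr1. Qed.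

Lemma gmul0r a : gmul 0 a = 0.
Proof. by apply/ffunP => g; rewrite !ffunE big1 // => h _; rewrite ffunE mul0r. Qed.

Lemma gmulDl a b c : gmul (a + b) c = gmul a c + gmul b c.
Proof.
by apply/ffunP => g; rewrite !ffunE -big_split; apply: eq_bigr => h _; rewrite ffunE mulrDl.
Qed.

Lemma gmulDr a b c : gmul a (b + c) = gmul a b + gmul a c.
Proof.
by apply/ffunP => g; rewrite !ffunE -big_split; apply: eq_bigr => h _; rewrite ffunE mulrDr.
Qed.

Lemma gmulrN a b : gmul a (- b) = - gmul a b.
Proof.
by apply/ffunP => g; rewrite !ffunE -sumrN; apply: eq_bigr => h _; rewrite !ffunE mulrN.
Qed.

Lemma gscalar0 : gscalar 0 = 0.
Proof. by apply/ffunP => g; rewrite !ffunE if_same. Qed.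

Lemma gscalarM x y : gmul (gscalar x) (gscalar y) = gscalar (x * y).
Proof.
by rewrite gmul_scalarl; apply/ffunP => g; rewrite !ffunE; case: eqP; rewrite ?mulr0.
Qed.

Lemma gmul_gelem k a g : gmul (gelem k) a g = a (k^-1 * g)%g.
Proof.
rewrite ffunE (bigD1 k) //= big1 ?ffunE ?eqxx ?mul1r ?addr0 //.
by move=> h hk; rewrite ffunE (negbTE hk) mul0r.
Qed.

Lemma sum_gelem_enum (c : {ffun 'I_#|gT| -> R}) a :
  [ffun g => \sum_(i < #|gT|) c i * gmul (gelem (enum_val i)) a g] =
  gmul [ffun h => c (enum_rank h)] a.
Proof.
apply/ffunP => g; rewrite !ffunE (reindex (@enum_val gT gT)) /=; last first.
  by exists enum_rank => x _; [apply: enum_valK | apply: enum_rankK].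
by apply: eq_bigr => i _; rewrite gmul_gelem ffunE enum_valK.
Qed.

End GroupAlgebra.

Section CommutativeGroupAlgebra.

Variables (R : comPzRingType) (gT : finGroupType).
Implicit Types (a b : {ffun gT -> R}) (x : R).

Lemma gmulC a b : abelian [set: gT] -> gmul a b = gmul b a.
Proof.
move=> /centsP cGG; apply/ffunP => g; rewrite !ffunE.
have inj : injective (fun k : gT => g * k^-1)%g by move=> x y /mulgI/invg_inj.
rewrite (reindex_inj inj) /=; apply: eq_bigr => k _.
by rewrite mulrC invMg invgK -mulgA mulVg mulg1 (cGG g _ k^-1%g) ?inE.
Qed.

Lemma gscalar_central x a : gmul a (gscalar gT x) = gmul (gscalar gT x) a.
Proof.
by rewrite gmul_scalarl gmul_scalarr; apply/ffunP => g; rewrite !ffunE mulrC.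
Qed.

(* Iterating [u = u (x v)] puts u in x^n (S G) for every n. *)
Lemma gmul_fixed_nilpotent_scalar x n a b :
  x ^+ n = 0 -> a = gmul a (gmul (gscalar gT x) b) -> a = 0.
Proof.
move=> xn0 ha; suff [w ->] : exists w, a = gmul (gscalar gT (x ^+ n)) w.
  by rewrite xn0 gscalar0 gmul0r.
elim: n {xn0} => [|n [w hw]]; first by exists a; rewrite gmul1r.
exists (gmul w b); rewrite {1}ha {1}hw exprSr -gscalarM !gmulA.
by rewrite -[gmul w _]gmulA gscalar_central !gmulA.
Qed.

End CommutativeGroupAlgebra.

Section Reduction.

Variables (R F : comNzRingType) (gT : finGroupType) (rho : {rmorphism R -> F}).
Implicit Types (a b : {ffun gT -> R}).

Lemma gmap_mul a b : gmap rho (gmul a b) = gmul (gmap rho a) (gmap rho b).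
Proof.
apply/ffunP => g; rewrite !ffunE rmorph_sum; apply: eq_bigr => h _.
by rewrite !ffunE rmorphM.
Qed.

Lemma gmap_one : gmap rho (gone R gT) = gone F gT.
Proof. by apply/ffunP => g; rewrite !ffunE; case: eqP; rewrite ?rmorph1 ?rmorph0. Qed.

Lemma gmap_lift : (forall y, exists x, rho x = y) ->
  forall b' : {ffun gT -> F}, exists b, gmap rho b = b'.
Proof.
move=> surj b'; have [f hf] := fin_all_exists (fun g => surj (b' g)).
by exists (finfun f); apply/ffunP => g; rewrite !ffunE hf.
Qed.

End Reduction.

Section ChainRing.

Variables (S : finComUnitRingType) (F : fieldType) (rho : {rmorphism S -> F}).
Hypothesis hres : residue_map rho.

Lemma residue_nonunit_nilpotent (x : S) : x \notin GRing.unit -> exists n, x ^+ n = 0.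
Proof.
move=> /(proj2 hres) rx0.
have /injectivePn[i [j neq_ij eq_xij]] : ~~ injectiveb (fun i : 'I_#|S|.+1 => x ^+ i).
  by apply/injectiveP => /leq_card; rewrite card_ord ltnn.
(* x^k (1 - x^(l-k)) = 0, and 1 - x^(l-k) reduces to 1, hence is a unit. *)
suff cancel_pow (k l : nat) : (k < l)%N -> x ^+ k = x ^+ l -> x ^+ k = 0.
  case: (ltngtP i j) => [lt_ij|lt_ji|eq_ij].
  - by exists i; apply: cancel_pow lt_ij eq_xij.
  - by exists j; apply: cancel_pow lt_ji (esym eq_xij).
  - by move: neq_ij; rewrite -val_eqE /= eq_ij eqxx.
move=> lt_kl eq_xkl.
have unit_1B : (1 - x ^+ (l - k)) \is a GRing.unit.
  apply/negbNE/negP => /(proj2 hres); rewrite rmorphB rmorph1 rmorphXn rx0 expr0n.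
  by rewrite subn_eq0 leqNgt lt_kl subr0 => /eqP; rewrite oner_eq0.
apply: (mulIr unit_1B); rewrite mul0r mulrBr mulr1 -exprD subnKC ?(ltnW lt_kl) //.
by rewrite eq_xkl subrr.
Qed.

Lemma is_ideal_principal (x : S) : is_ideal [set x * s | s : S].
Proof.
split.
- by apply/imsetP; exists 0 => //; rewrite mulr0.
- move=> _ _ /imsetP[s _ ->] /imsetP[t _ ->].
  by apply/imsetP; exists (s + t) => //; rewrite mulrDr.
- by move=> r _ /imsetP[s _ ->]; apply/imsetP; exists (r * s) => //; rewrite mulrCA.
Qed.

Hypothesis hchain : chain_ring S.

(* A non-unit generating a principal ideal of maximal size contains every
   non-unit: its ideal is comparable with, hence not smaller than, any other. *)
Lemma chain_ring_max_ideal_principal :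
  exists2 t : S, t \notin GRing.unit & forall y, y \notin GRing.unit -> exists s, y = t * s.
Proof.
pose I (x : S) := [set x * s | s : S].
have [t t_nonunit t_max] :=
  @arg_maxnP S 0 (fun x => x \notin GRing.unit) (fun x => #|I x|) (negbT (unitr0 S)).
exists t => // y y_nonunit.
have yIy : y \in I y by apply/imsetP; exists 1 => //; rewrite mulr1.
case: (hchain (is_ideal_principal y) (is_ideal_principal t)) => [/subsetP sub|sub].
  by have /imsetP[s _ ->] := sub y yIy; exists s.
have eqI : I t = I y by apply/eqP; rewrite eqEcard sub; apply: t_max.
by move: yIy; rewrite -eqI => /imsetP[s _ ->]; exists s.
Qed.

Lemma residue_unit_regular (gT : finGroupType) (a : {ffun gT -> S}) (b' : {ffun gT -> F}) :
  gmul (gmap rho a) b' = gone F gT -> forall u, gmul u a = 0 -> u = 0.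
Proof.
move=> ab'1 u ua0; have [surj hker] := hres.
have [b rb] := gmap_lift surj b'.
have [t t_nonunit t_gen] := chain_ring_max_ideal_principal.
have [N tN0] := residue_nonunit_nilpotent t_nonunit.
pose m := gmul a b - gone S gT.
have m_nonunit g : m g \notin GRing.unit.
  apply/hker; have := congr1 (fun c : {ffun gT -> F} => c g) (gmap_one gT rho).
  by rewrite -ab'1 -rb -gmap_mul !ffunE rmorphB => ->; rewrite subrr.
have [m' hm'] := fin_all_exists (fun g => t_gen _ (m_nonunit g)).
have m_scalar : m = gmul (gscalar gT t) (finfun m').
  by rewrite gmul_scalarl; apply/ffunP => g; rewrite hm' !ffunE.
apply: (gmul_fixed_nilpotent_scalar (b := - finfun m') tN0).
have -> : gmul (gscalar gT t) (- finfun m') = - m.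
  by rewrite m_scalar !gmul_scalarl; apply/ffunP => g; rewrite !ffunE mulrN.
have : gmul u (gmul a b) = 0 by rewrite -gmulA ua0 gmul0r.
rewrite -[gmul a b](subrK (gone S gT)) -/m gmulDr gmulr1 => /eqP.
by rewrite addr_eq0 gmulrN => /eqP ->; rewrite opprK.
Qed.

End ChainRing.

Section Hermitian.

Variables (S : finComUnitRingType) (gT : finGroupType) (sigma : {rmorphism S -> S}).
Hypothesis habel : abelian [set: gT].
Implicit Types (a b u v d : {ffun gT -> S}).

Lemma shatM a b : shat sigma (gmul a b) = gmul (shat sigma a) (shat sigma b).
Proof.
move/centsP: habel => cGG; apply/ffunP => g; rewrite !ffunE rmorph_sum.
rewrite (reindex_inj (inv_inj (@invgK gT))) /=.
apply: eq_bigr => k _; rewrite !ffunE rmorphM invgK invMg invgK.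
by rewrite (cGG k _ g^-1%g) ?inE.
Qed.

Lemma gmul_shat1 a b : gmul a (shat sigma b) 1%g = \sum_g a g * sigma (b g).
Proof. by rewrite ffunE; apply: eq_bigr => h _; rewrite ffunE mulg1 invgK. Qed.

Lemma gmul_shat_gelem1 a g : gmul a (shat sigma (gelem S g)) 1%g = a g.
Proof.
rewrite gmul_shat1 (bigD1 g) //= big1 ?ffunE ?eqxx ?rmorph1 ?mulr1 ?addr0 //.
by move=> h hg; rewrite ffunE (negbTE hg) rmorph0 mulr0.
Qed.

Lemma herm_Ccd1 d u v :
  herm sigma (gmul u (gone S gT), gmul u d) (gmul v (gone S gT), gmul v d) =
  gmul (gmul u (gone S gT + gmul d (shat sigma d))) (shat sigma v) 1%g.
Proof.
rewrite /herm /= !gmulr1 -!gmul_shat1 gmulDr gmulr1 gmulDl [RHS]ffunE; congr (_ + _).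
rewrite shatM [gmul (shat sigma v) _]gmulC // -!gmulA.
by rewrite [gmul (gmul (gmul u d) _) _]gmulA.
Qed.

Lemma Ccd1_herm_LCD d :
  (forall u, gmul u (gone S gT + gmul d (shat sigma d)) = 0 -> u = 0) ->
  herm_LCD sigma (Ccd (gone S gT) d).
Proof.
move=> regular; apply/setP => x; rewrite !inE; apply/idP/eqP => [|->].
  case/andP=> /imsetP[u _ ->] /forallP orth.
  suff -> : u = 0 by rewrite !gmul0r.
  apply/regular/ffunP => g; rewrite [RHS]ffunE -(gmul_shat_gelem1 _ g) -herm_Ccd1.
  by apply/eqP/(implyP (orth _)); apply/imsetP; exists (gelem S g).
have C0 : (0 : pair_ga S gT) \in Ccd (gone S gT) d.
  by apply/imsetP; exists 0 => //; rewrite !gmul0r.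
rewrite C0; apply/forallP => y; apply/implyP => _.
by rewrite /herm !big1 ?addr0 // => g _; rewrite ffunE mul0r.
Qed.

End Hermitian.

Lemma Ccd_qa_code (S : finComUnitRingType) (gT : finGroupType) (c d : {ffun gT -> S}) :
  qa_code2 (Ccd c d).
Proof.
split.
- by apply/imsetP; exists 0 => //; rewrite !gmul0r.
- move=> _ _ /imsetP[u _ ->] /imsetP[v _ ->].
  by apply/imsetP; exists (u + v) => //; rewrite !gmulDl.
- by move=> w _ /imsetP[u _ ->]; apply/imsetP; exists (gmul w u) => //; rewrite !gmulA.
Qed.

Lemma Ccd1_free_rank (S : finComUnitRingType) (gT : finGroupType) (d : {ffun gT -> S}) :
  free_rank (Ccd (gone S gT) d) #|gT|.
Proof.
pose e (i : 'I_#|gT|) := gelem S (enum_val i : gT).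
exists (fun i => (gmul (e i) (gone S gT), gmul (e i) d)); split.
  by move=> i; apply/imsetP; exists (e i).
move=> _ /imsetP[u _ ->]; exists [ffun i => u (enum_val i)]; split.
  have uE : [ffun h => [ffun i => u (enum_val i)] (enum_rank h)] = u.
    by apply/ffunP => h; rewrite !ffunE enum_rankK.
  by rewrite /e !sum_gelem_enum uE.
move=> c' [] /=; rewrite /e sum_gelem_enum !gmulr1 => -> _.
by apply/ffunP => i; rewrite !ffunE enum_valK.
Qed.

Theorem mainTheorem15
  (R S : finComUnitRingType) (iota : {rmorphism R -> S})
  (sigma : {rmorphism S -> S})
  (FR FS : finFieldType) (rhoR : {rmorphism R -> FR}) (rhoS : {rmorphism S -> FS})
  (q : nat) (gT : finGroupType)
  (chainR : chain_ring R) (chainS : chain_ring S)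
  (hgal : galois_ext2 iota sigma)
  (hresR : residue_map rhoR) (hresS : residue_map rhoS)
  (hq : #|FR| = q) (hq2 : #|FS| = (q ^ 2)%N)
  (habel : abelian [set: gT]) (hodd : odd #|gT|) (hcop : coprime #|gT| q)
  (d : {ffun gT -> S}) :
  gunit (gmap rhoS (gone S gT + gmul d (shat sigma d))) ->
  [/\ qa_code2 (Ccd (gone S gT) d),
      herm_LCD sigma (Ccd (gone S gT) d)
    & free_rank (Ccd (gone S gT) d) #|gT|].
Proof.
case=> b' [inv_b' _]; split.
- exact: Ccd_qa_code.
- exact/Ccd1_herm_LCD/(residue_unit_regular hresS chainS inv_b').
- exact: Ccd1_free_rank.
Qed.
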